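(* For any two Mori fiber primitive generating sets $A_{\mathrm f}\subset A$ and $A'_{\mathrm f}\subset A'$ in $N_{\mathbb{R}}$, there exists a finite sequence of elementary links connecting them.
   Context: $N\simeq\mathbb{Z}^d$, $N_{\mathbb{R}}=N\otimes\mathbb{R}$. A primitive generating set of a real vector space spanned by a lattice is a finite set of primitive lattice points whose nonnegative linear combinations give the whole space. A reduction $B\supset B'$: inclusion of primitive generating sets of the same space with $|B|=|B'|+1$. A fiber structure $A_{\mathrm f}\subset A$ ($A$ a primitive generating set): $A_{\mathrm f}\ne\emptyset$ is a primitive generating set of its linear span $L$ (lattice $N\cap L$) and $A_{\mathrm f}=L\cap A$; base $A_{\mathrm b}=\{\bar\pi(v):v\in A\setminus A_{\mathrm f}\}$ where $\pi:N\to N/(N\cap L)$ and $\bar\pi(v)$ is the primitive generator of $\mathbb{R}_{\ge0}\pi(v)$. Irreducible: $|A|=|A_{\mathrm f}|+|A_{\mathrm b}|$. Mori fiber structure (written $A_{\mathrm f}\subset_m A$): irreducible with $|A_{\mathrm f}|=\dim L+1$; such a pair is a Mori fiber primitive generating set. An elementary link between $A_{\mathrm f}\subset_m A$ and $A'_{\mathrm f}\subset_m A'$ is one of the following, or the same with the two pairs exchanged: (trivial) $A=A'$, $A_{\mathrm f}=A'_{\mathrm f}$; (I$_{\mathrm d}$) $A\supset A'$ a reduction, $A_{\mathrm f}=A'_{\mathrm f}$; (I$_{\mathrm m}$) a fiber structure $A''_{\mathrm f}\subset A''$ with $A''=A$, $A_{\mathrm f}\subset_m A''_{\mathrm f}$,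 $A''\supset A'$ and $A''_{\mathrm f}\supset A'_{\mathrm f}$ reductions; (II$_{\mathrm{irr}}$) a fiber structure $A''_{\mathrm f}\subset A''$ with $A''\supset A$, $A''\supset A'$, $A''_{\mathrm f}\supset A_{\mathrm f}$, $A''_{\mathrm f}\supset A'_{\mathrm f}$ all reductions; (II$_{\mathrm{ni}}$) a fiber structure $A''_{\mathrm f}\subset A''$ with $A''\supset A$, $A''\supset A'$ reductions and $A_{\mathrm f}=A''_{\mathrm f}=A'_{\mathrm f}$; (IV$_{\mathrm m}$) a fiber structure $A''_{\mathrm f}\subset A''$ with $A=A''=A'$, $A_{\mathrm f}\subset_m A''_{\mathrm f}$ and $A'_{\mathrm f}\subset_m A''_{\mathrm f}$. A sequence of elementary links connecting two Mori fiber primitive generating sets is a chain of Mori fiber primitive generating sets from one to the other in which consecutive members are related by an elementary link. *)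

From HB Require Import structures.
From mathcomp Require Import all_boot all_order all_algebra finmap.
From mathcomp Require Import boolp reals.
Set Implicit Arguments. Unset Strict Implicit. Unset Printing Implicit Defensive.
Import Order.TTheory GRing.Theory Num.Theory.
Local Open Scope ring_scope.
Local Open Scope fset_scope.

(* The lattice N = Z^d is 'rV[int]_d; N_R = 'rV[R]_d for a real field R. *)
Section Defs.
Variables (R : realType) (d : nat).

Definition lat := 'rV[int]_d.

Definition emb (v : lat) : 'rV[R]_d := map_mx (fun z : int => z%:~R) v.

Definition primitive (v : lat) : Prop :=
  v != 0 /\ forall (k : nat) (w : lat), v = w *+ k -> k = 1%N.

Definition spanV (B : {fset lat}) : {vspace 'rV[R]_d} :=
  <<[seq emb v | v <- B]>>%VS.

Definition incone (B : {fset lat}) (x : 'rV[R]_d) : Prop :=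
  exists c : lat -> R, (forall v, 0 <= c v) /\ x = \sum_(v <- B) c v *: emb v.

Definition pgs (B : {fset lat}) : Prop :=
  (forall v, v \in B -> primitive v) /\
  (forall x, x \in spanV B -> incone B x).

Definition reduction (B B' : {fset lat}) : Prop :=
  [/\ pgs B, pgs B', B' `<=` B, spanV B = spanV B' & #|` B| = (#|` B'|).+1].

Definition fiber (Af A : {fset lat}) : Prop :=
  [/\ pgs A, Af != fset0, pgs Af & Af = [fset v in A | emb v \in spanV Af]].

(* pi(v) and pi(w) (images in the quotient by L = span Af) lie on the same
   open ray, i.e. \bar\pi(v) = \bar\pi(w) *)
Definition sameray (Af : {fset lat}) (v w : lat) : Prop :=
  exists2 lam : R, 0 < lam & emb v - lam *: emb w \in spanV Af.

(* the base A_b, represented by the set of its fibres of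
   v |-> \bar\pi(v) on A \ Af (one element per element of A_b) *)
Definition baseRays (Af A : {fset lat}) : {fset {fset lat}} :=
  [fset [fset w in A `\` Af | `[< sameray Af v w >]] | v in A `\` Af].

Definition irreducible (Af A : {fset lat}) : Prop :=
  fiber Af A /\ #|` A| = (#|` Af| + #|` baseRays Af A|)%N.

Definition mori (Af A : {fset lat}) : Prop :=
  irreducible Af A /\ #|` Af| = (\dim (spanV Af)).+1.

Definition moriPGS (p : {fset lat} * {fset lat}) : Prop :=
  mori p.1 p.2 /\ spanV p.2 = fullv.

Definition elink0 (p q : {fset lat} * {fset lat}) : Prop :=
  let: (Af, A) := p in let: (Af', A') := q in
  (A = A' /\ Af = Af')
  \/ (reduction A A' /\ Af = Af')
  \/ (exists Af'', [/\ fiber Af'' A, mori Af Af'', reduction A A'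
                      & reduction Af'' Af'])
  \/ (exists A'' Af'', [/\ fiber Af'' A'', reduction A'' A, reduction A'' A',
                         reduction Af'' Af & reduction Af'' Af'])
  \/ (exists A'', [/\ fiber Af A'', reduction A'' A, reduction A'' A'
                    & Af = Af'])
  \/ (exists Af'', [/\ fiber Af'' A, A = A', mori Af Af'' & mori Af' Af'']).

Definition elink (p q : {fset lat} * {fset lat}) : Prop :=
  elink0 p q \/ elink0 q p.

Inductive chain : {fset lat} * {fset lat} -> {fset lat} * {fset lat} -> Prop :=
| chain_refl p : moriPGS p -> chain p p
| chain_step p q r : moriPGS p -> elink p q -> chain q r -> chain p r.

End Defs.

From mathcomp Require Import all_boot all_order all_algebra finmap boolp reals.
Set Implicit Arguments. Unset Strict Implicit. Unset Printing Implicit Defensive.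
Import Order.TTheory GRing.Theory Num.Theory.
Local Open Scope fset_scope.
Local Open Scope ring_scope.

(* Every Mori fiber primitive generating set is linked to a simplex (T, T):
   T consists of a basis X of N_R made of primitive vectors together with the
   primitive vector v0 on a ray in the interior of -cone(X).
   With the fiber Af fixed, any two total sets A, A' are connected by links
   I_d and II_ni adding the elements of A' \ A and removing those of A \ A' one
   at a time. If Af does not span N_R, Af minus a vertex a0 is a basis of
   span Af; extending it to a basis X of N_R gives a simplex T such that
   Af \subset {a0} \cup T is Mori, and a link I_m joins (Af, {a0} \cup T) to
   (T, T). Two simplices sharing a vertex t are joined through the fiber
   {t, -t}; for d >= 2 any two simplices are joined through a third one sharing
   a vertex with each, and for d = 1 the only simplex is {1, -1}. *)

Lemma int_mulrn_eq1 (x : int) (k : nat) : x *+ k = 1 -> k = 1%N.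
Proof.
move=> /(congr1 absz); rewrite -mulr_natr natz abszM /= => /eqP.
by rewrite muln_eq1 => /andP[_ /eqP].
Qed.

Lemma mem_take_drop (T : eqType) k (s : seq T) x :
  (x \in s) = (x \in take k s) || (x \in drop k s).
Proof. by rewrite -mem_cat cat_take_drop. Qed.

Section Primitive.
Variable d : nat.
Local Notation lat := (lat d).

Lemma primitiveN (v : lat) : primitive v -> primitive (- v).
Proof.
case=> v0 H; split; first by rewrite oppr_eq0.
by move=> k w vw; apply: (H k (- w)); rewrite mulNrn -vw opprK.
Qed.

Lemma primitive_delta (j : 'I_d) : primitive (delta_mx 0 j : lat).
Proof.
split.
  by apply/negP => /eqP /matrixP /(_ 0 j); rewrite !mxE !eqxx /= => /eqP.
move=> k w /matrixP /(_ 0 j); rewrite mulmxnE !mxE !eqxx /= => /esym.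
exact: int_mulrn_eq1.
Qed.

(* m is the largest common divisor of the entries of v. *)
Lemma primitive_multiple (v : lat) : v != 0 ->
  exists w m, [/\ primitive w, (0 < m)%N & v = w *+ m].
Proof.
move=> v0.
have /existsP[i /existsP[j vij]] : [exists i, exists j, v i j != 0].
  apply: contraNT v0 => /existsPn H; apply/eqP/matrixP => a b.
  by have /existsPn/(_ b)/negPn/eqP := H a; rewrite mxE.
pose P m := (0 < m)%N && [forall a, forall b, (m%:Z %| v a b)%Z].
have exP : exists m, P m by exists 1%N; apply/forallP => a; apply/forallP => b; exact: dvd1z.
have ubP m : P m -> (m <= `|v i j|)%N.
  case/andP=> m0 /forallP /(_ i) /forallP /(_ j); rewrite dvdzE /= => H.
  by apply: dvdn_leq => //; rewrite absz_gt0.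
case: (ex_maxnP exP ubP) => m /andP[m0 /forallP Hm] Hmax.
pose w := \matrix_(a, b) (v a b %/ m%:Z)%Z.
have vw : v = w *+ m.
  apply/matrixP => a b; rewrite mulmxnE mxE -mulr_natr natz divzK //.
  by move: (Hm a) => /forallP.
exists w, m; split => //; split.
  by apply: contraNneq v0 => w0; rewrite vw w0 mul0rn.
move=> k w' ww'.
have k0 : (0 < k)%N.
  by case: k ww' => // ww'; move: v0; rewrite vw ww' mulr0n mul0rn eqxx.
have /Hmax : P (k * m)%N.
  rewrite /P muln_gt0 k0 m0 /=; apply/forallP => a; apply/forallP => b.
  by rewrite vw ww' -mulrnA mulmxnE -mulr_natr natz dvdz_mull.
by rewrite -{2}(mul1n m) leq_pmul2r // => k1; apply/eqP; rewrite eqn_leq k1 k0.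
Qed.

Lemma primitive_dim_gt0 (v : lat) : primitive v -> (0 < d)%N.
Proof.
case=> + _; apply: contraNT; rewrite -eqn0Ngt => /eqP d0.
by apply/eqP/matrixP => i j; have := ltn_ord j; rewrite {2}d0.
Qed.

Lemma primitive_dim1 (v : lat) : d = 1%N -> primitive v ->
  v = const_mx 1 \/ v = - const_mx 1.
Proof.
move=> d1 [_ pv]; have d0 : (0 < d)%N by rewrite d1.
pose j0 : 'I_d := Ordinal d0.
have jj (j : 'I_d) : j = j0.
  by apply/val_inj => /=; move: (ltn_ord j); rewrite {2}d1 ltnS leqn0 => /eqP.
set a := v 0 j0.
have vc : v = const_mx a by apply/matrixP => i j; rewrite mxE (ord1 i) (jj j).
have /pv : v = map_mx (fun z : int => sgz z) v *+ `|a|%N.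
  apply/matrixP => i j; rewrite mulmxnE !mxE (ord1 i) (jj j) -/a.
  by rewrite -mulr_natr natz -intEsg.
case Ha: a => [n|n] /= a1; first by left; rewrite vc Ha a1.
by right; rewrite vc Ha; case: a1 => ->; apply/matrixP => i j; rewrite !mxE.
Qed.

End Primitive.

Section FiniteSets.
Variable T : choiceType.
Implicit Types A B : {fset T}.

Definition fsdist A B := (#|` A `\` B| + #|` B `\` A|)%N.

Lemma fsdistD1_lt A B b : b \in A -> b \notin B -> (fsdist (A `\ b) B < fsdist A B)%N.
Proof.
move=> bA bB; rewrite /fsdist -addSn leq_add //.
  rewrite (cardfsD1 b (A `\` B)) !inE bA bB /= ltnS fsubset_leq_card //.
  by apply/fsubsetP => v; rewrite !inE => /andP[-> /andP[-> ->]].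
rewrite fsubset_leq_card //; apply/fsubsetP => v; rewrite !inE => /andP[+ vB].
by rewrite vB negb_and negbK => /orP[/eqP vb|->//]; move: bB; rewrite -vb vB.
Qed.

Lemma fsdistU1_lt A B x : x \in B -> x \notin A -> (fsdist (x |` A) B < fsdist A B)%N.
Proof.
move=> xB xA; rewrite /fsdist -addnS leq_add //.
  rewrite fsubset_leq_card //; apply/fsubsetP => v; rewrite !inE.
  by case/andP=> vB /orP[/eqP vx|->]; rewrite ?vB //; move: vB; rewrite vx xB.
rewrite (cardfsD1 x (B `\` A)) !inE xA xB /= ltnS fsubset_leq_card //.
by apply/fsubsetP => v; rewrite !inE negb_or => /andP[/andP[-> ->] ->].
Qed.

Lemma fsdistD1_le A B b : b \notin B -> (fsdist (A `\ b) B <= fsdist A B)%N.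
Proof.
move=> bB; rewrite /fsdist leq_add ?fsubset_leq_card //; apply/fsubsetP => v.
  by rewrite !inE => /andP[-> /andP[_ ->]].
rewrite !inE negb_and negbK => /andP[/orP[/eqP->|->//]]; by rewrite (negPf bB).
Qed.

Lemma in_fsetD1_enum A a v : a \in A ->
  (v \in A) = (v == a) || (v \in enum_fset (A `\ a)).
Proof. by move=> aA; rewrite !inE; case: eqP => [->|]. Qed.

End FiniteSets.

Section MoriFiberChains.
Variables (R : realType) (d : nat).
Local Notation lat := (lat d).
Local Notation E := (@emb R d).
Local Notation spanV := (@spanV R d).
Local Notation incone := (@incone R d).
Local Notation sameray := (@sameray R d).
Local Notation chain := (@chain R d).
Local Notation elink := (@elink R d).
Implicit Types (A B Af : {fset lat}) (v w : lat).

(** * Cones and primitive generating sets of N_R *)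

Lemma embD v w : E (v + w) = E v + E w.
Proof. by apply/matrixP => i j; rewrite !mxE intrD. Qed.

Lemma embN v : E (- v) = - E v.
Proof. by apply/matrixP => i j; rewrite !mxE intrN. Qed.

Lemma emb0 : E 0 = 0.
Proof. by apply/matrixP => i j; rewrite !mxE. Qed.

Lemma embMn v m : E (v *+ m) = m%:R *: E v.
Proof. by apply/matrixP => i j; rewrite !mxE mulmxnE rmorphMn mulr_natl. Qed.

Lemma emb_sum (s : seq lat) (f : lat -> lat) :
  E (\sum_(x <- s) f x) = \sum_(x <- s) E (f x).
Proof.
elim: s => [|a s IH]; first by rewrite !big_nil emb0.
by rewrite !big_cons embD IH.
Qed.

Lemma emb_inj : injective E.
Proof.
move=> u v /matrixP H; apply/matrixP => i j.
by move: (H i j); rewrite !mxE; exact: intr_inj.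
Qed.

Lemma emb_primitive_neq0 v : primitive v -> E v != 0.
Proof. by case=> v0 _; apply: contraNneq v0; rewrite -emb0 => /emb_inj ->. Qed.

Lemma emb_spanV B v : v \in B -> E v \in spanV B.
Proof. by move=> vB; apply: memv_span; apply: map_f. Qed.

Lemma incone_mem B v : v \in B -> incone B (E v).
Proof.
move=> vB; exists (fun w => (w == v)%:R); split => [w|]; first by case: (w == v).
rewrite (big_fsetD1 v) //= eqxx scale1r big1_fset ?addr0 // => w.
by rewrite !inE => /andP[/negPf -> _] _; rewrite scale0r.
Qed.

Lemma incone0 B : incone B 0.
Proof. by exists (fun _ => 0); split => //; rewrite big1 // => w _; rewrite scale0r. Qed.

Lemma inconeD B x y : incone B x -> incone B y -> incone B (x + y).
Proof.
move=> [c [c0 ->]] [c' [c0' ->]]; exists (fun v => c v + c' v); split.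
  by move=> v; rewrite addr_ge0.
by rewrite -big_split /=; apply: eq_bigr => v _; rewrite scalerDl.
Qed.

Lemma inconeZ B a x : 0 <= a -> incone B x -> incone B (a *: x).
Proof.
move=> a0 [c [c0 ->]]; exists (fun v => a * c v); split.
  by move=> v; rewrite mulr_ge0.
by rewrite scaler_sumr; apply: eq_bigr => v _; rewrite scalerA.
Qed.

Lemma incone_trans A B x :
  (forall v, v \in A -> incone B (E v)) -> incone A x -> incone B x.
Proof.
move=> AB [c [c0 ->]]; rewrite big_seq; elim/big_rec: _ => [|v y /AB vB yB].
  exact: incone0.
exact/inconeD/yB/inconeZ.
Qed.

Lemma incone_sub A B x : A `<=` B -> incone A x -> incone B x.
Proof. by move/fsubsetP=> AB; apply: incone_trans => v /AB; exact: incone_mem. Qed.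

Definition full_pgs B := (forall v, v \in B -> primitive v) /\ (forall x, incone B x).

Lemma full_pgsW B : full_pgs B -> pgs R B.
Proof. by case. Qed.

Lemma full_pgs_spanV B : full_pgs B -> spanV B = fullv.
Proof.
case=> _ H; apply/eqP; rewrite eqEsubv subvf; apply/subvP => x _.
have [c [_ ->]] := H x; rewrite big_seq; apply: memv_suml => v vB.
exact/memvZ/emb_spanV.
Qed.

Lemma spanV_full_pgs B : pgs R B -> spanV B = fullv -> full_pgs B.
Proof. by case=> H1 H2 Hs; split => // x; apply: H2; rewrite Hs memvf. Qed.

Lemma full_pgs_trans A B : full_pgs A ->
  (forall v, v \in A -> incone B (E v)) ->
  (forall v, v \in B -> primitive v) -> full_pgs B.
Proof. by case=> _ H AB HB; split => // x; apply: incone_trans AB (H x). Qed.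

Lemma full_pgs_sub A B : full_pgs A -> A `<=` B ->
  (forall v, v \in B -> primitive v) -> full_pgs B.
Proof. by case=> _ H AB HB; split => // x; apply: incone_sub AB (H x). Qed.

Lemma full_pgsU1 A x : full_pgs A -> primitive x -> full_pgs (x |` A).
Proof.
move=> FA px; apply: (full_pgs_sub FA (fsubsetU1 _ _)) => v.
by rewrite !inE => /orP[/eqP->//|]; case: FA => + _; apply.
Qed.

Lemma reduction_full A B : full_pgs A -> full_pgs B -> B `<=` A ->
  #|` A| = (#|` B|).+1 -> reduction R A B.
Proof.
by move=> FA FB BA AB; split => //; [exact: full_pgsW.. | rewrite !full_pgs_spanV].
Qed.

Lemma fiber_full Af A : full_pgs A -> Af != fset0 -> pgs R Af ->
  (forall v, (v \in Af) = (v \in A) && (E v \in spanV Af)) -> fiber R Af A.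
Proof.
move=> FA Af0 PAf AfE; split => //; first exact: full_pgsW.
by apply/fsetP => v; rewrite AfE !inE.
Qed.

Lemma sameray_refl Af v : sameray Af v v.
Proof. by exists 1; rewrite ?ltr01 // scale1r subrr mem0v. Qed.

Lemma sameray_sym Af v w : sameray Af v w -> sameray Af w v.
Proof.
case=> l l0 H; exists l^-1; first by rewrite invr_gt0.
have -> : E w - l^-1 *: E v = (- l^-1) *: (E v - l *: E w).
  by rewrite scalerBr scalerA mulNr mulVf ?gt_eqF // scaleN1r opprK addrC scaleNr.
exact: memvZ.
Qed.

Lemma sameray_trans Af v w u : sameray Af v w -> sameray Af w u -> sameray Af v u.
Proof.
case=> l l0 H [m m0 H']; exists (l * m); first by rewrite mulr_gt0.
have -> : E v - (l * m) *: E u = (E v - l *: E w) + l *: (E w - m *: E u).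
  by rewrite scalerBr scalerA addrA subrK.
by apply: memvD => //; apply: memvZ.
Qed.

Definition rays_injective Af A := forall v w, v \in A -> v \notin Af ->
  w \in A -> w \notin Af -> sameray Af v w -> v = w.

Lemma card_baseRaysP Af A : Af `<=` A ->
  #|` A| = (#|` Af| + #|` baseRays R Af A|)%N <-> rays_injective Af A.
Proof.
move=> AfA.
have -> : #|` A| = (#|` Af| + #|` A `\` Af|)%N.
  by rewrite (cardfsDS AfA) subnKC // fsubset_leq_card.
have inray v w : (w \in [fset u in A `\` Af | `[< sameray Af v u >]]) =
    [&& w \in A, w \notin Af & `[< sameray Af v w >]].
  by rewrite !inE -andbA andbCA.
split.
  move/eqP; rewrite eqn_add2l eq_sym => /card_in_imfsetP ray_inj v w vA vAf wA wAf svw.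
  apply: ray_inj; rewrite ?inE ?vA ?wA ?vAf ?wAf //; apply/fsetP => u; rewrite !inray.
  case: (u \in A) (u \in Af) => [] [] //=; apply/asboolP/asboolP => H.
    exact: sameray_trans (sameray_sym svw) H.
  exact: sameray_trans svw H.
move=> Hinj; congr (_ + _)%N; apply/esym/eqP/card_in_imfsetP => v w.
rewrite !inE => /andP[vAf vA] /andP[wAf wA] eray.
have : w \in [fset u in A `\` Af | `[< sameray Af w u >]].
  by rewrite inray wA wAf /=; apply/asboolP; exact: sameray_refl.
by rewrite -eray inray => /and3P[_ _ /asboolP]; exact: Hinj.
Qed.

(* Unpacked moriPGS: N_R = span A, and irreducibility of Af \subset A is
   injectivity of v |-> \bar\pi(v) on A \ Af (card_baseRaysP). *)
Record mfpgs Af A : Prop := Mfpgs {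
  mfpgs_full : full_pgs A;
  mfpgs_fiber_neq0 : Af != fset0;
  mfpgs_fiber_pgs : pgs R Af;
  mfpgs_fiberE : forall v, (v \in Af) = (v \in A) && (E v \in spanV Af);
  mfpgs_rays_inj : rays_injective Af A;
  mfpgs_card : #|` Af| = (\dim (spanV Af)).+1 }.

Lemma mfpgs_sub Af A : mfpgs Af A -> Af `<=` A.
Proof. by case=> _ _ _ AfE _ _; apply/fsubsetP => v; rewrite AfE => /andP[]. Qed.

Lemma mfpgs_primitive Af A v : mfpgs Af A -> v \in A -> primitive v.
Proof. by case=> [[+ _]] *; apply. Qed.

Lemma mfpgs_moriPGS Af A : mfpgs Af A -> moriPGS R (Af, A).
Proof.
move=> M; have AfA := mfpgs_sub M; case: M => FA Af0 PAf AfE Hinj card.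
split; last exact: full_pgs_spanV.
by split => //; split; [exact: fiber_full | exact/(card_baseRaysP AfA)].
Qed.

Lemma moriPGS_mfpgs Af A : moriPGS R (Af, A) -> mfpgs Af A.
Proof.
move=> [[[[PA Af0 PAf AfE] Hirr] card] spanA].
rewrite /= in PA Af0 PAf AfE Hirr card spanA.
have {}AfE v : (v \in Af) = (v \in A) && (E v \in spanV Af) by rewrite {1}AfE !inE.
have AfA : Af `<=` A by apply/fsubsetP => v; rewrite AfE => /andP[].
by split => //; [exact: spanV_full_pgs | exact/(card_baseRaysP AfA)].
Qed.

Lemma chain_trans p q r : chain p q -> chain q r -> chain p r.
Proof. by elim=> // p0 q0 r0 Mp0 Lpq _ IH /IH; exact: chain_step. Qed.

Lemma elink_sym p q : elink p q -> elink q p.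
Proof. by case; [right|left]. Qed.

Lemma chain1 p q : moriPGS R p -> moriPGS R q -> elink p q -> chain p q.
Proof. by move=> Mp Mq Lpq; exact: chain_step Mp Lpq (chain_refl Mq). Qed.

Lemma chain_sym p q : chain p q -> chain q p.
Proof.
elim=> [p0 Mp0|p0 q0 r0 Mp0 Lpq Cqr IH]; first exact: chain_refl.
by apply: chain_trans IH (chain1 _ Mp0 (elink_sym Lpq)); case: Cqr.
Qed.

(** * Links with a fixed fiber *)

Lemma mfpgs_delete Af A b : mfpgs Af A -> b \notin Af -> full_pgs (A `\ b) ->
  mfpgs Af (A `\ b).
Proof.
case=> FA Af0 PAf AfE Hinj card bAf FAb; split => //.
- move=> v; rewrite !inE; case: (eqVneq v b) => [->|_] /=; first exact: negPf.
  exact: AfE.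
- by move=> v w; rewrite !inE => /andP[_ vA] vAf /andP[_ wA] wAf; exact: Hinj.
Qed.

Lemma elink_delete Af A b : mfpgs Af A -> b \in A -> full_pgs (A `\ b) ->
  elink (Af, A) (Af, A `\ b).
Proof.
move=> M bA FAb; left; right; left; split => //.
by apply: reduction_full (mfpgs_full M) FAb (fsubsetDl _ _) _; rewrite (cardfsD1 b A) bA.
Qed.

Lemma mfpgs_add Af A x : mfpgs Af A -> primitive x -> E x \notin spanV Af ->
  (forall b, b \in A -> b \notin Af -> ~ sameray Af x b) -> mfpgs Af (x |` A).
Proof.
move=> M px xL xnew; have AfA := mfpgs_sub M.
case: M => FA Af0 PAf AfE Hinj card; split => //.
- exact: full_pgsU1.
- move=> v; rewrite !inE; case: (eqVneq v x) => [->|_] /=; last exact: AfE.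
  by rewrite (negPf xL); apply/negbTE; apply: contra xL; exact: emb_spanV.
- move=> v w; rewrite !inE => /orP[/eqP->|vA] vAf /orP[/eqP->|wA] wAf // svw.
  + by case: (xnew w wA wAf svw).
  + by case: (xnew v vA vAf (sameray_sym svw)).
  + exact: Hinj.
Qed.

Lemma elink_add Af A x : mfpgs Af A -> mfpgs Af (x |` A) -> x \notin A ->
  elink (Af, A) (Af, x |` A).
Proof.
move=> M Mx xA; right; right; left; split => //.
apply: reduction_full (mfpgs_full Mx) (mfpgs_full M) (fsubsetU1 _ _) _.
by rewrite cardfsU1 xA.
Qed.

Lemma mfpgs_swap Af A x b : mfpgs Af A -> primitive x -> E x \notin spanV Af ->
  x \notin A -> b \in A -> b \notin Af -> sameray Af x b -> mfpgs Af ((x |` A) `\ b).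
Proof.
move=> M px xL xA bA bAf sxb; have AfA := mfpgs_sub M.
have xAf : x \notin Af by apply: contra xL; exact: emb_spanV.
case: M => FA Af0 PAf AfE Hinj card; split => //.
- apply: (full_pgs_trans FA) => [v vA|v]; last first.
    by rewrite !inE => /andP[_ /orP[/eqP->//|]]; case: FA => + _; apply.
  case: (eqVneq v b) => [->|vb]; last by apply: incone_mem; rewrite !inE vb vA orbT.
  have xb : x != b by apply: contraNneq xA => ->.
  case: sxb => l l0 Hl.
  (* The second summand lies in span Af, which is the cone of Af. *)
  have -> : E b = l^-1 *: E x + l^-1 *: (- (E x - l *: E b)).
    by rewrite -scalerDr opprB addrCA subrr addr0 scalerA mulVf ?gt_eqF // scale1r.
  apply: inconeD; apply: inconeZ; rewrite ?invr_ge0 ?ltW //.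
    by apply: incone_mem; rewrite !inE xb eqxx.
  apply: (@incone_sub Af); last by case: PAf => _; apply; rewrite memvN.
  apply/fsubsetP => u uAf; rewrite !inE (fsubsetP AfA _ uAf) orbT andbT.
  by apply: contraNneq bAf => <-.
- move=> v; rewrite !inE; case: (eqVneq v b) => [->|vb] /=; first exact: negPf.
  case: (eqVneq v x) => [->|_] /=; last exact: AfE.
  by rewrite (negPf xL); exact: negPf.
- move=> v w; rewrite !inE.
  move=> /andP[vb /orP[/eqP->|vA]] vAf /andP[wb /orP[/eqP->|wA]] wAf // svw.
  + by move: wb; rewrite (Hinj b w bA bAf wA wAf (sameray_trans (sameray_sym sxb) svw)) eqxx.
  + by move: vb; rewrite (Hinj b v bA bAf vA vAf
      (sameray_trans (sameray_sym sxb) (sameray_sym svw))) eqxx.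
  + exact: Hinj.
Qed.

Lemma elink_swap Af A x b : mfpgs Af A -> mfpgs Af ((x |` A) `\ b) ->
  x \notin A -> b \in A -> E x \notin spanV Af -> elink (Af, A) (Af, (x |` A) `\ b).
Proof.
move=> M Mxb xA bA xL; have px : primitive x.
  by apply: (mfpgs_primitive Mxb); rewrite !inE eqxx andbT; apply: contraNneq xA => ->.
have FxA := full_pgsU1 (mfpgs_full M) px.
left; right; right; right; right; left; exists (x |` A); split => //.
- apply: fiber_full => //; [exact: mfpgs_fiber_neq0 M | exact: mfpgs_fiber_pgs M|].
  move=> v; rewrite !inE; case: (eqVneq v x) => [->|_] /=; last exact: (mfpgs_fiberE M).
  by rewrite (negPf xL); apply/negbTE; apply: contra xL; exact: emb_spanV.
- apply: reduction_full FxA (mfpgs_full M) (fsubsetU1 _ _) _.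
  by rewrite cardfsU1 xA.
- apply: reduction_full FxA (mfpgs_full Mxb) (fsubsetDl _ _) _.
  by rewrite (cardfsD1 b (x |` A)) !inE bA orbT.
Qed.

Lemma same_fiber_link_step Af A A' : mfpgs Af A -> mfpgs Af A' -> A != A' ->
  exists A1, [/\ mfpgs Af A1, elink (Af, A) (Af, A1) & (fsdist A1 A' < fsdist A A')%N].
Proof.
move=> MA MA' AA'; have AfA' := mfpgs_sub MA'.
have [A'A|/fsubsetPn [x xA' xA]] := boolP (A' `<=` A).
  have /fsubsetPn [b bA bA'] : ~~ (A `<=` A').
    by apply: contra AA' => AA'; rewrite eqEfsubset AA'.
  have bAf : b \notin Af by apply: contra bA' => /(fsubsetP AfA').
  have FAb : full_pgs (A `\ b).
    apply: full_pgs_sub (mfpgs_full MA') _ _.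
      by apply/fsubsetP => v vA'; rewrite !inE (fsubsetP A'A _ vA') andbT;
        apply: contraNneq bA' => <-.
    by move=> v; rewrite !inE => /andP[_]; exact: mfpgs_primitive MA.
  exists (A `\ b); split; [exact: mfpgs_delete | exact: elink_delete | exact: fsdistD1_lt].
have xL : E x \notin spanV Af.
  have := mfpgs_fiberE MA' x; rewrite xA' /= => <-.
  by apply: contra xA => /(fsubsetP (mfpgs_sub MA)).
have px := mfpgs_primitive MA' xA'.
have [[b [bA bAf sxb]]|xnew] :=
  pselect (exists b, [/\ b \in A, b \notin Af & sameray Af x b]).
  have bA' : b \notin A'.
    apply/negP => bA'; have xAf : x \notin Af by apply: contra xL; exact: emb_spanV.
    by move: xA; rewrite (mfpgs_rays_inj MA' xA' xAf bA' bAf sxb) bA.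
  have Mxb := mfpgs_swap MA px xL xA bA bAf sxb.
  exists ((x |` A) `\ b); split; [done | exact: elink_swap |].
  exact: leq_ltn_trans (fsdistD1_le _ bA') (fsdistU1_lt xA' xA).
have Mx : mfpgs Af (x |` A) by apply: mfpgs_add => // b bA bAf sxb; apply: xnew; exists b.
by exists (x |` A); split; [done | exact: elink_add | exact: fsdistU1_lt].
Qed.

Lemma chain_same_fiber Af A A' : mfpgs Af A -> mfpgs Af A' -> chain (Af, A) (Af, A').
Proof.
move=> MA MA'; have [n] := ubnP (fsdist A A'); elim: n A MA => // n IH A MA.
rewrite ltnS => dist_n; have [<-|AA'] := eqVneq A A'.
  exact/chain_refl/mfpgs_moriPGS.
have [A1 [M1 L1 lt1]] := same_fiber_link_step MA MA' AA'.
exact: chain_step (mfpgs_moriPGS MA) L1 (IH _ M1 (leq_trans lt1 dist_n)).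
Qed.

(** * Simplices *)

Definition lincomb (X : seq lat) (g : lat -> R) := \sum_(x <- X) g x *: E x.

Lemma lincombD X g1 g2 :
  lincomb X (fun x => g1 x + g2 x) = lincomb X g1 + lincomb X g2.
Proof. by rewrite /lincomb -big_split; apply: eq_bigr => x _; rewrite scalerDl. Qed.

Lemma lincombZ X a g : lincomb X (fun x => a * g x) = a *: lincomb X g.
Proof. by rewrite /lincomb scaler_sumr; apply: eq_bigr => x _; rewrite scalerA. Qed.

Lemma lincombN X g : lincomb X (fun x => - g x) = - lincomb X g.
Proof. by rewrite /lincomb -sumrN; apply: eq_bigr => x _; rewrite scaleNr. Qed.

Lemma lincomb_cat X Y g : lincomb (X ++ Y) g = lincomb X g + lincomb Y g.
Proof. exact: big_cat. Qed.

Lemma eq_in_lincomb X g1 g2 : {in X, g1 =1 g2} -> lincomb X g1 = lincomb X g2.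
Proof.
move=> eq_g; rewrite /lincomb !big_seq; apply: eq_bigr => x xX; by rewrite eq_g.
Qed.

Lemma lincomb_eq0 X g : {in X, forall x, g x = 0} -> lincomb X g = 0.
Proof. by move=> g0; rewrite /lincomb big_seq big1 // => x /g0 ->; rewrite scale0r. Qed.

Lemma lincomb_delta X x : uniq X -> x \in X -> lincomb X (fun y => (y == x)%:R) = E x.
Proof.
move=> uX xX; rewrite /lincomb (big_rem x) //= eqxx scale1r big_seq big1 ?addr0 //.
by move=> y; rewrite (mem_rem_uniq _ uX) !inE => /andP[/negPf -> _]; rewrite scale0r.
Qed.

Lemma lincomb_span X g : lincomb X g \in <<map E X>>%VS.
Proof.
rewrite /lincomb big_seq; apply: memv_suml => x xX; apply/memvZ/memv_span.
exact: map_f.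
Qed.

Lemma free_lincomb_eq0 X g : free (map E X) -> lincomb X g = 0 ->
  forall x, x \in X -> g x = 0.
Proof.
move=> fX gX0 x xX.
have /freeP /= free_coef0 := fX : free (map_tuple E (in_tuple X)).
have xi : (index x X < size X)%N by rewrite index_mem.
rewrite -(nth_index 0 xX); apply: (free_coef0 (fun i => g (nth 0 X i)) _ (Ordinal xi)).
rewrite -[RHS]gX0 /lincomb (big_nth 0) big_mkord.
by apply: eq_bigr => i _; rewrite (nth_map 0).
Qed.

Lemma span_lincomb X y : uniq X -> y \in <<map E X>>%VS -> exists g, y = lincomb X g.
Proof.
elim: X y => [|x X IH] y /=.
  by rewrite span_nil memv0 => _ /eqP ->; exists (fun _ => 0); rewrite /lincomb big_nil.
case/andP=> xX uX; rewrite span_cons.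
case/memv_addP=> u /vlineP[a ->] [w /(IH _ uX) [g ->] ->].
exists (fun z => if z == x then a else g z); rewrite /lincomb big_cons eqxx; congr (_ + _).
by apply: eq_in_lincomb => z zX; case: eqP => // zx; move: xX; rewrite -zx zX.
Qed.

Lemma free_uniq_emb X : free (map E X) -> uniq X.
Proof. by move/free_uniq; rewrite (map_inj_uniq emb_inj). Qed.

Lemma lincomb_notin_span U W g y : free (map E (U ++ W)) -> y \in W -> g y != 0 ->
  lincomb (U ++ W) g \notin <<map E U>>%VS.
Proof.
move=> fUW yW gy; have uUW := free_uniq_emb fUW.
have uU : uniq U by move: uUW; rewrite cat_uniq => /andP[].
have UW z : z \in W -> z \notin U.
  by move=> zW; apply/negP => zU; move: uUW; rewrite cat_uniq => /and3P[_ /hasP []]; exists z.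
apply/negP => /(span_lincomb uU) [a Ha].
pose a' x := if x \in U then a x else 0.
have a'E : lincomb (U ++ W) a' = lincomb U a.
  rewrite lincomb_cat (@lincomb_eq0 W a') ?addr0.
    by apply: eq_in_lincomb => x xU; rewrite /a' xU.
  by move=> x /UW xU; rewrite /a' (negPf xU).
have : lincomb (U ++ W) (fun x => g x + - a' x) = 0.
  by rewrite lincombD lincombN a'E -Ha subrr.
move/(free_lincomb_eq0 fUW)/(_ y); rewrite mem_cat yW orbT /a' (negPf (UW _ yW)).
by rewrite oppr0 addr0 => /(_ isT) /eqP; rewrite (negPf gy).
Qed.

Lemma dim_fullv : \dim (fullv : {vspace 'rV[R]_d}) = d.
Proof. by rewrite dimvf dim_matrix; exact: mul1n. Qed.

Lemma span_free_full X : size X = d -> free (map E X) -> <<map E X>>%VS = fullv.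
Proof.
move=> sX fX; apply/eqP; rewrite eqEdim subvf dim_fullv /=.
by move: fX; rewrite /free => /eqP ->; rewrite size_map sX.
Qed.

Definition simplex (X : seq lat) (v0 : lat) :=
  [/\ size X = d, free (map E X), (forall x, x \in v0 :: X -> primitive x) &
   exists c : lat -> R, (forall x, x \in X -> 0 < c x) /\ E v0 = - lincomb X c].

Definition simplex_fset (X : seq lat) (v0 : lat) := seq_fset tt (v0 :: X).

Lemma in_simplex_fset X v0 v : (v \in simplex_fset X v0) = (v == v0) || (v \in X).
Proof. by rewrite /simplex_fset seq_fsetE in_cons. Qed.

Lemma simplex_primitive X v0 x : simplex X v0 -> x \in v0 :: X -> primitive x.
Proof. by case=> _ _ + _; apply. Qed.

Lemma simplex_uniq X v0 : simplex X v0 -> uniq (v0 :: X).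
Proof.
case=> _ fX _ [c [c0 v0E]]; rewrite /= free_uniq_emb // andbT; apply/negP => v0X.
have : lincomb X (fun x => (x == v0)%:R + c x) = 0.
  by rewrite lincombD lincomb_delta ?free_uniq_emb // v0E addNr.
move/(free_lincomb_eq0 fX)/(_ v0 v0X); rewrite eqxx => /eqP; rewrite gt_eqF //.
by rewrite ltr_wpDl ?ler01 ?c0.
Qed.

Lemma big_simplex_fset X v0 (F : lat -> 'rV[R]_d) : uniq (v0 :: X) ->
  \sum_(v <- simplex_fset X v0) F v = F v0 + \sum_(x <- X) F x.
Proof.
by move=> u; rewrite /simplex_fset (perm_big _ (seq_fset_perm tt _)) undup_id // big_cons.
Qed.

Lemma card_simplex_fset X v0 : uniq (v0 :: X) -> #|` simplex_fset X v0| = (size X).+1.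
Proof. by move=> u; rewrite /simplex_fset size_seq_fset undup_id. Qed.

Lemma simplex_perm X X' v0 : perm_eq X X' -> simplex X v0 ->
  simplex X' v0 /\ simplex_fset X v0 = simplex_fset X' v0.
Proof.
move=> pXX' [sX fX pX [c [c0 v0E]]]; split.
  split; first by rewrite -(perm_size pXX').
  - by rewrite -(perm_free (perm_map E pXX')).
  - by move=> x; rewrite in_cons -(perm_mem pXX') -in_cons; apply: pX.
  exists c; split; first by move=> x; rewrite -(perm_mem pXX'); apply: c0.
  by rewrite v0E /lincomb (perm_big _ pXX').
by apply/fsetP => x; rewrite !in_simplex_fset (perm_mem pXX').
Qed.

Lemma simplex_full_pgs X v0 : simplex X v0 -> full_pgs (simplex_fset X v0).
Proof.
move=> S; have u := simplex_uniq S; case: S => sX fX pX [c [c0 v0E]].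
split=> [v|y]; first by rewrite in_simplex_fset -in_cons; exact: pX.
have /(span_lincomb (free_uniq_emb fX)) [g ->] : y \in <<map E X>>%VS.
  by rewrite span_free_full ?memvf.
(* Adding t times the relation E v0 + lincomb X c = 0, for t large enough,
   makes all coefficients nonnegative. *)
pose t := \sum_(x <- X) `|g x| / c x.
have t_term_ge0 x : x \in X -> 0 <= `|g x| / c x.
  by move=> xX; rewrite divr_ge0 // ltW // c0.
have t0 : 0 <= t by rewrite /t big_seq sumr_ge0.
have coef_ge0 x : x \in X -> 0 <= g x + t * c x.
  move=> xX; have cx := c0 x xX.
  have : `|g x| / c x <= t.
    rewrite /t (big_rem x) //= lerDl big_seq sumr_ge0 // => z /mem_rem; exact: t_term_ge0.
  rewrite ler_pdivrMr // => le_gt; apply: le_trans (_ : 0 <= g x + `|g x|) _.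
    by rewrite addrC -lerBlDr sub0r -normrN ler_norm.
  by rewrite lerD2l.
pose h v := if v == v0 then t else if v \in X then g v + t * c v else 0.
exists h; split.
  by move=> v; rewrite /h; case: ifP => // _; case: ifP => // vX; exact: coef_ge0.
rewrite big_simplex_fset // /h eqxx v0E scalerN.
have -> : \sum_(x <- X) h x *: E x = lincomb X (fun x => g x + t * c x).
  apply: eq_in_lincomb => x xX; rewrite /h xX.
  by case: eqP => // xv0; move: u; rewrite /= -xv0 xX.
by rewrite lincombD lincombZ addrCA addNr addr0.
Qed.

Lemma simplex_mfpgs X v0 : simplex X v0 -> mfpgs (simplex_fset X v0) (simplex_fset X v0).
Proof.
move=> S; have F := simplex_full_pgs S; split => //.
- by apply/fset0Pn; exists v0; rewrite in_simplex_fset eqxx.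
- exact: full_pgsW.
- by move=> v; case vT: (v \in _); rewrite //= emb_spanV.
- by move=> v w ->.
- rewrite card_simplex_fset ?(simplex_uniq S) // full_pgs_spanV // dim_fullv.
  by case: S => ->.
Qed.

Section SimplexFace.
Variables (X : seq lat) (v0 : lat) (k : nat).
Hypothesis S : simplex X v0.
Local Notation U := (take k X).
Local Notation W := (drop k X).

Let free_UW : free (map E (U ++ W)).
Proof. by rewrite cat_take_drop; case: S. Qed.

Let lincomb_UW g : lincomb X g = lincomb (U ++ W) g.
Proof. by rewrite cat_take_drop. Qed.

Let in_W_X w : w \in W -> w \in X.
Proof. by move=> wW; rewrite -(cat_take_drop k X) mem_cat wW orbT. Qed.

Let coef_v0 : exists c, [/\ forall x, x \in W -> 0 < c x & E v0 = - lincomb (U ++ W) c].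
Proof.
case: S => _ _ _ [c [c0 v0E]]; exists c.
by split; [move=> x /in_W_X; exact: c0 | rewrite -lincomb_UW].
Qed.

Let delta_W w : w \in W -> E w = lincomb (U ++ W) (fun x => (x == w)%:R).
Proof.
by move=> wW; rewrite -lincomb_UW lincomb_delta ?in_W_X //; case: S => _ /free_uniq_emb.
Qed.

Lemma simplex_vertex_notin_face v : (k < d)%N -> v \in v0 :: W ->
  E v \notin <<map E U>>%VS.
Proof.
move=> kd; rewrite in_cons => /orP[/eqP->|vW].
  have w0W : nth 0 W 0 \in W by rewrite mem_nth // size_drop subn_gt0; case: S => ->.
  have [c [c0 ->]] := coef_v0; rewrite -lincombN.
  by apply: (lincomb_notin_span free_UW w0W); rewrite oppr_eq0 gt_eqF ?c0.
by rewrite delta_W //; apply: (lincomb_notin_span free_UW vW); rewrite eqxx pnatr_eq0.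
Qed.

Lemma simplex_rays_off_face v w l : v \in v0 :: W -> w \in v0 :: W -> v != w ->
  0 < l -> E v - l *: E w \notin <<map E U>>%VS.
Proof.
have [c [c0 v0E]] := coef_v0.
rewrite !in_cons => /orP[/eqP->|vW] /orP[/eqP->|wW] //; first by rewrite eqxx.
- move=> _ l0; rewrite v0E delta_W // -lincombN -lincombZ -lincombN -lincombD.
  apply: (lincomb_notin_span free_UW wW); rewrite eqxx mulr1 -opprD oppr_eq0.
  by rewrite gt_eqF // addr_gt0 ?c0.
- move=> _ l0; rewrite v0E delta_W // scalerN opprK -lincombZ -lincombD.
  apply: (lincomb_notin_span free_UW vW); rewrite eqxx.
  by rewrite gt_eqF // ltr_wpDr ?ltr01 // ltW // mulr_gt0 ?c0.
- move=> vw l0; rewrite (delta_W vW) (delta_W wW) -lincombZ -lincombN -lincombD.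
  apply: (lincomb_notin_span free_UW vW).
  by rewrite eqxx (negPf vw) mulr0 subr0 oner_eq0.
Qed.

End SimplexFace.

Lemma face_vertex_notin_simplex_fset X v0 k a : simplex X v0 -> (k < d)%N ->
  a \notin take k X -> E a \in <<map E (take k X)>>%VS -> a \notin simplex_fset X v0.
Proof.
move=> S kd aU aL; have := contraL (simplex_vertex_notin_face S kd) aL.
by rewrite in_simplex_fset (mem_take_drop k X) (negPf aU).
Qed.

Lemma mfpgs_face_simplex X v0 k Af a0 : simplex X v0 -> (k < d)%N ->
  (forall v, (v \in Af) = (v == a0) || (v \in take k X)) ->
  a0 \notin take k X -> E a0 \in <<map E (take k X)>>%VS -> pgs R Af ->
  #|` Af| = (\dim (spanV Af)).+1 -> mfpgs Af (a0 |` simplex_fset X v0).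
Proof.
move=> S kd AfE a0U a0L PAf card.
have a0Af : a0 \in Af by rewrite AfE eqxx.
have spanAf : spanV Af = <<map E (take k X)>>%VS.
  apply/eqP; rewrite eqEsubv; apply/andP; split.
    apply/span_subvP => _ /mapP [v + ->]; rewrite AfE => /orP[/eqP->//|vU].
    exact/memv_span/map_f.
  by apply: sub_span => _ /mapP [v vU ->]; apply: map_f; rewrite AfE vU orbT.
have off_face v : v \in a0 |` simplex_fset X v0 -> v \notin Af -> v \in v0 :: drop k X.
  rewrite AfE !inE in_simplex_fset (mem_take_drop k X) negb_or => + /andP[va vU].
  by rewrite (negPf va) (negPf vU) /=; apply.
split => //.
- by apply: full_pgsU1 (simplex_full_pgs S) _; case: PAf => + _; apply.
- by apply/fset0Pn; exists a0.
- move=> v; rewrite spanAf; have [vAf|vAf] := boolP (v \in Af).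
    move: (vAf); rewrite AfE => /orP[/eqP->|vU]; first by rewrite !inE eqxx a0L.
    rewrite !inE in_simplex_fset (mem_take vU) !orbT /=.
    exact/esym/memv_span/map_f.
  apply/esym/negbTE/nandP.
  have [vA|] := boolP (v \in a0 |` simplex_fset X v0); [right | by left].
  exact: (simplex_vertex_notin_face S kd (off_face v vA vAf)).
- move=> v w vA vAf wA wAf [l l0]; rewrite spanAf => vwL; apply/eqP.
  apply: contraTT vwL => vw.
  exact: (simplex_rays_off_face S (off_face v vA vAf) (off_face w wA wAf) vw l0).
Qed.

Lemma elink_to_full_fiber Af A a : mfpgs Af A -> a \in A -> full_pgs (A `\ a) ->
  elink (Af, A) (A `\ a, A `\ a).
Proof.
move=> M aA FAa; have FA := mfpgs_full M.
have RAa : reduction R A (A `\ a).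
  by apply: reduction_full FA FAa (fsubsetDl _ _) _; rewrite (cardfsD1 a A) aA.
left; right; right; left; exists A; split => //; last by case: (mfpgs_moriPGS M).
apply: fiber_full => //; [by apply/fset0Pn; exists a | exact: full_pgsW |].
by move=> v; case vA: (v \in A); rewrite //= emb_spanV.
Qed.

Lemma emb_delta (j : 'I_d) : E (delta_mx 0 j) = delta_mx 0 j.
Proof. by apply/matrixP => a b; rewrite !mxE; case: (_ && _). Qed.

Lemma free_extend (Cs U : seq lat) : free (map E U) -> exists W,
  [/\ {subset W <= Cs}, free (map E (W ++ U)) &
      forall c, c \in Cs -> E c \in <<map E (W ++ U)>>%VS].
Proof.
elim: Cs U => [|c Cs IH] U fU; first by exists [::]; split.
have [cU|cU] := boolP (E c \in <<map E U>>%VS).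
  have [W [sW fW spW]] := IH U fU; exists W; split => //.
    by move=> x xW; rewrite in_cons sW ?orbT.
  move=> c'; rewrite in_cons => /orP[/eqP->|]; last exact: spW.
  move: cU; apply/subvP/sub_span => _ /mapP [x xU ->]; apply: map_f.
  by rewrite mem_cat xU orbT.
have fcU : free (map E (c :: U)) by rewrite /= free_cons cU fU.
have [W [sW fW spW]] := IH _ fcU; exists (W ++ [:: c]); rewrite -catA /=; split => //.
  move=> x; rewrite mem_cat mem_seq1 => /orP[/sW xC|/eqP->];
    by rewrite in_cons ?xC ?eqxx ?orbT.
move=> c'; rewrite in_cons => /orP[/eqP->|]; last exact: spW.
by apply/memv_span/map_f; rewrite mem_cat mem_head orbT.
Qed.

Lemma free_extend_primitive (U : seq lat) : free (map E U) -> exists W,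
  [/\ forall w, w \in W -> primitive w, free (map E (U ++ W)) & size (U ++ W) = d].
Proof.
move=> fU; have [W [sW fW spW]] := free_extend [seq delta_mx 0 j | j <- enum 'I_d] fU.
have fUW : free (map E (U ++ W)).
  by rewrite (perm_free (perm_map E (permEl (perm_catC U W)))).
exists W; split => //; first by move=> w /sW /mapP [j _ ->]; exact: primitive_delta.
have full : <<map E (W ++ U)>>%VS = fullv.
  apply/eqP; rewrite eqEsubv subvf /=; apply/subvP => y _.
  rewrite [y]row_sum_delta; apply: memv_suml => j _; apply: memvZ.
  by rewrite -emb_delta; apply/spW/map_f; rewrite mem_enum.
move: fW; rewrite /free full dim_fullv size_map size_cat addnC -size_cat.
by move/eqP.
Qed.

(* The last vertex is the primitive vector on the ray of -(sum of X). *)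
Lemma simplex_exists (X : seq lat) : size X = d -> free (map E X) ->
  (forall x, x \in X -> primitive x) -> (0 < d)%N -> exists v0, simplex X v0.
Proof.
move=> sX fX pX d0; pose v : lat := - \sum_(x <- X) x.
have Ev : E v = - lincomb X (fun _ => 1).
  by rewrite embN emb_sum /lincomb; congr (- _); apply: eq_bigr => x _; rewrite scale1r.
have v0 : v != 0.
  apply/negP => /eqP v0; move: Ev; rewrite v0 emb0 => /esym/eqP.
  rewrite oppr_eq0 => /eqP X0.
  have xX : nth 0 X 0 \in X by rewrite mem_nth // sX.
  by have /eqP := free_lincomb_eq0 fX X0 xX; rewrite oner_eq0.
have [w [m [pw m0 vw]]] := primitive_multiple v0.
exists w; split => //; first by move=> x; rewrite in_cons => /orP[/eqP->//|]; exact: pX.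
exists (fun _ => m%:R^-1); split => [x _|]; first by rewrite invr_gt0 ltr0n.
have -> : E w = m%:R^-1 *: E v.
  by rewrite vw embMn scalerA mulVf ?scale1r // pnatr_eq0 -lt0n.
by rewrite Ev scalerN -lincombZ; congr (- lincomb _ _); apply/funext => x; rewrite mulr1.
Qed.

(** * Reduction to simplices *)

Lemma pgs_vertex_opp Af a0 : pgs R Af -> a0 \in Af ->
  exists2 c, forall x, 0 <= c x & E a0 = - lincomb (enum_fset (Af `\ a0)) c.
Proof.
move=> [_ PAf] a0Af; have : incone Af (- E a0) by apply: PAf; rewrite memvN emb_spanV.
case=> g [g0]; rewrite (big_fsetD1 a0) //= -/(lincomb _ g) => a0E.
have ga : 1 + g a0 != 0 by rewrite gt_eqF // ltr_wpDr.
exists (fun x => (1 + g a0)^-1 * g x) => [x|].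
  by rewrite mulr_ge0 // invr_ge0 addr_ge0.
have gE : lincomb (enum_fset (Af `\ a0)) g = - ((1 + g a0) *: E a0).
  by rewrite scalerDl scale1r opprD a0E [_ + lincomb _ g]addrC addrK.
by rewrite lincombZ gE scalerN opprK scalerA mulVf // scale1r.
Qed.

Lemma spanV_fsetD1 Af a0 : pgs R Af -> a0 \in Af ->
  spanV Af = <<map E (enum_fset (Af `\ a0))>>%VS.
Proof.
move=> PAf a0Af; have [c _ a0E] := pgs_vertex_opp PAf a0Af.
apply/eqP; rewrite eqEsubv; apply/andP; split.
  apply/span_subvP => _ /mapP [v + ->]; rewrite (in_fsetD1_enum _ a0Af).
  case/orP=> [/eqP->|vU]; first by rewrite a0E memvN lincomb_span.
  exact/memv_span/map_f.
apply: sub_span => _ /mapP [v vU ->].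
by apply: map_f; rewrite (in_fsetD1_enum _ a0Af) vU orbT.
Qed.

Lemma mfpgs_spanning_fiber Af A : mfpgs Af A -> spanV Af = fullv ->
  A = Af /\ exists X v0, simplex X v0 /\ simplex_fset X v0 = Af.
Proof.
move=> M Afull; have [a0 a0Af] := fset0Pn _ (mfpgs_fiber_neq0 M).
have PAf := mfpgs_fiber_pgs M; have AfE := in_fsetD1_enum _ a0Af.
set U := enum_fset (Af `\ a0) in AfE.
have [c c0 a0E] := pgs_vertex_opp PAf a0Af; rewrite -/U in a0E.
have spanU := spanV_fsetD1 PAf a0Af; rewrite -/U Afull in spanU.
have sU : size U = d.
  by move: (mfpgs_card M); rewrite (cardfsD1 a0) a0Af Afull dim_fullv => -[].
have fU : free (map E U) by rewrite /free -spanU dim_fullv size_map sU.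
split; first by apply/fsetP => v; rewrite (mfpgs_fiberE M) Afull memvf andbT.
exists U, a0; split; last by apply/fsetP => v; rewrite in_simplex_fset AfE.
split => //; first by move=> x; rewrite in_cons -AfE; case: PAf => + _; apply.
exists c; split => // x xU; rewrite lt_def c0 andbT; apply/eqP => cx0.
(* Writing - E x as a nonnegative combination of Af and using the relation
   for E a0 gives a linear relation in which x has coefficient >= 1. *)
have : incone Af (- E x).
  by case: PAf => _; apply; rewrite memvN emb_spanV // AfE xU orbT.
case=> g [g0]; rewrite (big_fsetD1 a0) //= -/(lincomb U g) => xE.
have : lincomb U (fun y => g y + - (g a0 * c y) + (y == x)%:R) = 0.
  rewrite !lincombD lincombN lincombZ lincomb_delta ?fset_uniq //.
  by rewrite -scalerN -a0E [lincomb U g + _]addrC -xE addNr.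
move/(free_lincomb_eq0 fU)/(_ x xU)/eqP; rewrite eqxx cx0 mulr0 oppr0 addr0.
by rewrite gt_eqF // ltr_wpDl ?ler01.
Qed.

Lemma chain_face_simplex X v0 k Af a0 : simplex X v0 -> (k < d)%N ->
  (forall v, (v \in Af) = (v == a0) || (v \in take k X)) ->
  a0 \notin take k X -> E a0 \in <<map E (take k X)>>%VS -> pgs R Af ->
  #|` Af| = (\dim (spanV Af)).+1 ->
  mfpgs Af (a0 |` simplex_fset X v0) /\
  chain (Af, a0 |` simplex_fset X v0) (simplex_fset X v0, simplex_fset X v0).
Proof.
move=> S kd AfE a0U a0L PAf card; have MT := simplex_mfpgs S.
have M := mfpgs_face_simplex S kd AfE a0U a0L PAf card.
have a0T := face_vertex_notin_simplex_fset S kd a0U a0L.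
split => //; apply: chain1 (mfpgs_moriPGS M) (mfpgs_moriPGS MT) _.
have := elink_to_full_fiber M (fsetU11 _ _); rewrite fsetU1K //; apply.
exact: mfpgs_full MT.
Qed.

Lemma face_extends_to_simplex Af a0 : pgs R Af -> a0 \in Af ->
  #|` Af| = (\dim (spanV Af)).+1 -> spanV Af != fullv ->
  exists X v0, simplex X v0 /\ (mfpgs Af (a0 |` simplex_fset X v0) /\
    chain (Af, a0 |` simplex_fset X v0) (simplex_fset X v0, simplex_fset X v0)).
Proof.
move=> PAf a0Af card Anfull; have AfE := in_fsetD1_enum _ a0Af.
set U := enum_fset (Af `\ a0) in AfE.
have spanU := spanV_fsetD1 PAf a0Af; rewrite -/U in spanU.
have dimU : \dim (spanV Af) = size U by move: card; rewrite (cardfsD1 a0) a0Af => -[].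
have fU : free (map E U) by rewrite /free -spanU dimU size_map.
have kd : (size U < d)%N.
  have := dimvS (subvf (spanV Af)); rewrite -dimU dim_fullv ltn_neqAle => ->.
  rewrite andbT; apply: contra Anfull => /eqP dimAf.
  by rewrite eqEdim subvf dim_fullv dimAf /=.
have [W [pW fUW sUW]] := free_extend_primitive fU.
have pUW x : x \in U ++ W -> primitive x.
  rewrite mem_cat => /orP[xU|]; last exact: pW.
  by case: PAf => + _; apply; rewrite AfE xU orbT.
have [v0 S] := simplex_exists sUW fUW pUW (leq_ltn_trans (leq0n _) kd).
have tU : take (size U) (U ++ W) = U by rewrite take_size_cat.
have a0L : E a0 \in <<map E U>>%VS by rewrite -spanU emb_spanV.
have a0U : a0 \notin U by rewrite !inE eqxx.
exists (U ++ W), v0; split => //.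
by apply: (chain_face_simplex (k := size U)); rewrite ?tU.
Qed.

Lemma chain_to_simplex p : moriPGS R p ->
  exists X v0, simplex X v0 /\ chain p (simplex_fset X v0, simplex_fset X v0).
Proof.
case: p => Af A /moriPGS_mfpgs M.
have [Afull|Anfull] := eqVneq (spanV Af) fullv.
  have [-> [X [v0 [S <-]]]] := mfpgs_spanning_fiber M Afull.
  by exists X, v0; split => //; exact/chain_refl/mfpgs_moriPGS/simplex_mfpgs.
have [a0 a0Af] := fset0Pn _ (mfpgs_fiber_neq0 M).
have [X [v0 [S [M' C]]]] :=
  face_extends_to_simplex (mfpgs_fiber_pgs M) a0Af (mfpgs_card M) Anfull.
by exists X, v0; split => //; apply: chain_trans (chain_same_fiber M M') C.
Qed.

(** * Connecting simplices *)

Lemma primitive_oppr_neq v : primitive v -> - v != v.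
Proof.
move=> pv; apply: contra (emb_primitive_neq0 pv) => /eqP vNv.
have : E v + E v = 0 by rewrite -{1}vNv embN addNr.
by rewrite -mulr2n -scaler_nat => /eqP; rewrite scaler_eq0 pnatr_eq0.
Qed.

(* Both simplices are linked to a Mori fiber structure {t, -t} \subset {-t} \cup T,
   and these two share their fiber. *)
Lemma chain_simplex_common_vertex t Y Y' v v' : (1 < d)%N ->
  simplex (t :: Y) v -> simplex (t :: Y') v' ->
  chain (simplex_fset (t :: Y) v, simplex_fset (t :: Y) v)
        (simplex_fset (t :: Y') v', simplex_fset (t :: Y') v').
Proof.
move=> d_gt1 S S'.
have pt : primitive t by apply: (simplex_primitive S); rewrite !inE eqxx orbT.
set Af : {fset lat} := [fset - t; t].
have AfE x : (x \in Af) = (x == - t) || (x \in [:: t]) by rewrite !inE.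
have spanAf : spanV Af = <[E t]>%VS.
  apply/eqP; rewrite eqEsubv; apply/andP; split.
    by apply/span_subvP => _ /mapP [x + ->]; rewrite !inE => /orP[] /eqP->;
      rewrite ?embN ?memvN memv_line.
  by rewrite -memvE emb_spanV // !inE eqxx orbT.
have PAf : pgs R Af.
  split=> [x|x]; first by rewrite !inE => /orP[] /eqP->; [exact: primitiveN|].
  rewrite spanAf => /vlineP [a ->]; have [a0|a0] := lerP 0 a.
    by apply: inconeZ => //; apply: incone_mem; rewrite !inE eqxx orbT.
  have -> : a *: E t = (- a) *: E (- t) by rewrite embN scalerN scaleNr opprK.
  by apply: inconeZ; [rewrite oppr_ge0 ltW | apply: incone_mem; rewrite !inE eqxx].
have card : #|` Af| = (\dim (spanV Af)).+1.
  by rewrite spanAf dim_vline emb_primitive_neq0 // cardfs2 primitive_oppr_neq.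
have link Z w : simplex (t :: Z) w ->
    let T := simplex_fset (t :: Z) w in mfpgs Af (- t |` T) /\ chain (Af, - t |` T) (T, T).
  move=> SZ; have t1 : take 1 (t :: Z) = [:: t] by rewrite /= take0.
  apply: (chain_face_simplex (k := 1)); rewrite ?t1 //.
    by rewrite inE primitive_oppr_neq.
  by rewrite /= span_seq1 embN memvN memv_line.
have [M C] := link _ _ S; have [M' C'] := link _ _ S'.
exact: chain_trans (chain_sym C) (chain_trans (chain_same_fiber M M') C').
Qed.

Lemma chain_simplices X1 v1 X2 v2 : (1 < d)%N -> simplex X1 v1 -> simplex X2 v2 ->
  chain (simplex_fset X1 v1, simplex_fset X1 v1) (simplex_fset X2 v2, simplex_fset X2 v2).
Proof.
move=> d_gt1 S1 S2.
case: X1 S1 => [|t Y1] S1.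
  by exfalso; case: S1 => sX _ _ _; move: d_gt1; rewrite -sX.
have pt : primitive t by apply: (simplex_primitive S1); rewrite !inE eqxx orbT.
have /hasP [t' t'X2 t'L] : has (fun x => E x \notin <[E t]>%VS) X2.
  apply: contraT => /hasPn tX2; case: S2 => sX2 fX2 _ _.
  have : (<<map E X2>> <= <[E t]>)%VS.
    by apply/span_subvP => _ /mapP [x xX ->]; move/negPn: (tX2 x xX).
  move/dimvS; rewrite span_free_full // dim_fullv dim_vline emb_primitive_neq0 //.
  by rewrite leqNgt d_gt1.
have pt' : primitive t' by apply: (simplex_primitive S2); rewrite in_cons t'X2 orbT.
have ftt' : free (map E [:: t; t']).
  rewrite /= free_cons seq1_free span_seq1 emb_primitive_neq0 // andbT.
  apply: contra t'L => /vlineP [a Ha].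
  have a0 : a != 0.
    by apply: contraNneq (emb_primitive_neq0 pt) => a0; rewrite Ha a0 scale0r.
  by apply/vlineP; exists a^-1; rewrite Ha scalerA mulVf // scale1r.
have [W [pW fX sX]] := free_extend_primitive ftt'.
have pX x : x \in [:: t, t' & W] -> primitive x.
  by rewrite !in_cons => /orP[/eqP->//|/orP[/eqP->//|]]; exact: pW.
have [v S] := simplex_exists sX fX pX (ltnW d_gt1).
apply: chain_trans (chain_simplex_common_vertex d_gt1 S1 S) _.
have [S' ->] := simplex_perm (permEl (perm_catCA [:: t] [:: t'] W)) S.
have [S2' ->] := simplex_perm (perm_to_rem t'X2) S2.
exact: chain_simplex_common_vertex d_gt1 S' S2'.
Qed.

Lemma simplex_fset_dim1 X v0 : d = 1%N -> simplex X v0 ->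
  simplex_fset X v0 = [fset const_mx 1; - const_mx 1].
Proof.
move=> d1 S; apply/eqP; rewrite eqEfcard; apply/andP; split.
  apply/fsubsetP => x; rewrite in_simplex_fset -in_cons => /(simplex_primitive S).
  by case/(primitive_dim1 d1) => ->; rewrite !inE eqxx ?orbT.
rewrite card_simplex_fset ?(simplex_uniq S) //; case: S => -> _ _ _.
by rewrite cardfs2 d1 ltnS leq_b1.
Qed.

End MoriFiberChains.

Theorem corollary3p2 (R : realType) (d : nat)
    (Af A Af' A' : {fset 'rV[int]_d}) :
  moriPGS R (Af, A) -> moriPGS R (Af', A') ->
  chain R (Af, A) (Af', A').
Proof.
move=> M M'.
have [X1 [v1 [S1 C1]]] := chain_to_simplex M.
have [X2 [v2 [S2 C2]]] := chain_to_simplex M'.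
apply: chain_trans C1 (chain_trans _ (chain_sym C2)).
have d_gt0 : (0 < d)%N.
  exact: primitive_dim_gt0 (simplex_primitive S1 (mem_head _ _)).
have [d_gt1|d_le1] := ltnP 1 d; first exact: chain_simplices.
have d1 : d = 1%N by apply/eqP; rewrite eqn_leq d_le1 d_gt0.
by rewrite (simplex_fset_dim1 d1 S1) -(simplex_fset_dim1 d1 S2);
  exact/chain_refl/mfpgs_moriPGS/simplex_mfpgs.
Qed.
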